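(* Fix $\epsilon>0$, a graphlet $\mathsf{G}$ on $k$ vertices, and a simple undirected graph $G$. The output $\tilde{\mathsf{G}}(G)$ of Algorithm 1 (described in the context) is an unbiased estimator of $\mathsf{G}(G)$, i.e. $\mathbb{E}[\tilde{\mathsf{G}}(G)]=\mathsf{G}(G)$.
   Context: Let $G=(V,E)$ be a simple undirected graph with $V=\{v_1,\dots,v_n\}$; user $v_i$ holds $a_i=(a_{i,1},\dots,a_{i,n})$ with $a_{i,j}=1$ iff $\{v_i,v_j\}\in E$. A graphlet is a simple graph $\mathsf{G}=(\mathsf{V},\mathsf{E})$, $\mathsf{V}=\{u_1,\dots,u_k\}$; $\mathsf{G}(G)$ is the number of distinct (not necessarily induced) subgraphs of $G$ isomorphic to $\mathsf{G}$, and $A(\mathsf{G})$ the number of automorphisms of $\mathsf{G}$. Algorithm 1: (1) every user $v_i$ reports, independently for each $j\ne i$ and independently across users, a bit $\tilde a_{i,j}$ with $\Pr[\tilde a_{i,j}=1]=e^{\epsilon}/(1+e^{\epsilon})$ if $a_{i,j}=1$ and $1/(1+e^{\epsilon})$ if $a_{i,j}=0$; (2) the server sets $\hat a_{i,j}=\frac{e^{\epsilon}+1}{e^{\epsilon}-1}\tilde a_{i,j}-\frac{1}{e^{\epsilon}-1}$; (3) with $\mathcal{D}$ the set of tuples $\mathcal{W}=(v_{\ell_1},\dots,v_{\ell_k})$ of pairwise distinct nodes, it sets $\tilde W(\mathcal{W},\mathsf{G})=\prod_{\{u_i,u_j\}\in\mathsf{E},\,i<j}\hat a_{\ell_i,\ell_j}$;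 (4) it outputs $\tilde{\mathsf{G}}(G)=\big(\sum_{\mathcal{W}\in\mathcal{D}}\tilde W(\mathcal{W},\mathsf{G})\big)/A(\mathsf{G})$. *)

From HB Require Import structures.
From mathcomp Require Import all_boot all_order all_algebra all_fingroup.
From mathcomp Require Import reals.
From mathcomp Require Import sequences exp.
Set Implicit Arguments. Unset Strict Implicit. Unset Printing Implicit Defensive.
Import Order.TTheory GRing.Theory Num.Theory.
Local Open Scope ring_scope.

Definition simple_graph (n : nat) (adj : rel 'I_n) : Prop :=
  (forall x y, adj x y = adj y x) /\ (forall x, adj x x = false).

Definition n_aut (k : nat) (gE : rel 'I_k) : nat :=
  #|[set s : {perm 'I_k} | [forall u, forall v, gE (s u) (s v) == gE u v]]|.

(* Subgraphs of G (vertex set S, set F of unordered edges, each an edge of G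
   with both endpoints in S) that are isomorphic to the graphlet gE. *)
Definition iso_subgraph (n k : nat) (adj : rel 'I_n) (gE : rel 'I_k)
    (SF : {set 'I_n} * {set {set 'I_n}}) : bool :=
  (SF.2 \subset [set [set x; y] | x in SF.1, y in SF.1 & adj x y]) &&
  [exists f : {ffun 'I_k -> 'I_n},
     [&& injectiveb f, f @: setT == SF.1 &
         [forall u, forall v, ([set f u; f v] \in SF.2) == gE u v]]].

Definition graphlet_count (n k : nat) (adj : rel 'I_n) (gE : rel 'I_k) : nat :=
  #|[set SF | iso_subgraph adj gE SF]|.

(* Outcome of step (1): all reported bits; omega (i,j) is tilde a_{i,j}.
   Diagonal bits are not reported; we fix them to false (probability 1). *)
Definition report (n : nat) := {ffun 'I_n * 'I_n -> bool}.

Definition rr_prob {R : realType} (eps : R) (diag a b : bool) : R :=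
  if diag then (~~ b)%:R
  else if b == a then expR eps / (1 + expR eps) else 1 / (1 + expR eps).

Definition report_prob {R : realType} (n : nat) (eps : R) (adj : rel 'I_n)
    (om : report n) : R :=
  \prod_(p : 'I_n * 'I_n) rr_prob eps (p.1 == p.2) (adj p.1 p.2) (om p).

Definition a_hat {R : realType} (n : nat) (eps : R) (om : report n)
    (i j : 'I_n) : R :=
  (expR eps + 1) / (expR eps - 1) * (om (i, j))%:R - 1 / (expR eps - 1).

Definition W_tilde {R : realType} (n k : nat) (eps : R) (gE : rel 'I_k)
    (om : report n) (l : {ffun 'I_k -> 'I_n}) : R :=
  \prod_(u : 'I_k) \prod_(v : 'I_k | (u < v)%N && gE u v)
     a_hat eps om (l u) (l v).

Definition estimator {R : realType} (n k : nat) (eps : R) (gE : rel 'I_k)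
    (om : report n) : R :=
  (\sum_(l : {ffun 'I_k -> 'I_n} | injectiveb l) W_tilde eps gE om l)
    / (n_aut gE)%:R.

Definition expected_estimate {R : realType} (n k : nat) (eps : R)
    (adj : rel 'I_n) (gE : rel 'I_k) : R :=
  \sum_(om : report n) report_prob eps adj om * estimator eps gE om.

From HB Require Import structures.
From mathcomp Require Import all_boot all_order all_algebra all_fingroup.
From mathcomp Require Import reals.
From mathcomp Require Import sequences exp.
From mathcomp Require Import ring.
Import Order.TTheory GRing.Theory Num.Theory.
Set Implicit Arguments. Unset Strict Implicit. Unset Printing Implicit Defensive.
Local Open Scope ring_scope.

(* The randomized-response bit reported for an off-diagonal pair is debiased so
   that E[a_hat i j] = a_{i,j}.  Reports of distinct pairs are independent and,
   for an injective tuple l, the factors of W~(l) involve distinct pairs, so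
   E[W~(l)] is the product of the a_{l u, l v} over the edges {u, v} of the
   graphlet: the indicator that l embeds the graphlet into G.  Every copy of
   the graphlet in G is the image of exactly A(graphlet) embeddings, which
   differ by an automorphism, so summing over l and dividing by A gives the
   number of copies. *)

Lemma eq_set2 (T : finType) (a b c d : T) :
  [set a; b] = [set c; d] -> (a = c /\ b = d) \/ (a = d /\ b = c).
Proof.
move/setP=> eq_ab_cd.
have := eq_ab_cd a; have := eq_ab_cd b; have := eq_ab_cd c; have := eq_ab_cd d.
rewrite !inE !eqxx /= ?orbT.
move=> /orP[]/eqP ? /orP[]/eqP ? /esym/orP[]/eqP ? /esym/orP[]/eqP ?; subst;
  first [by left | by right].
Qed.

Section Embeddings.

Variables (n k : nat) (adj : rel 'I_n) (gE : rel 'I_k).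

Definition edge_image (l : {ffun 'I_k -> 'I_n}) : {set {set 'I_n}} :=
  [set [set l q.1; l q.2] | q in [set q : 'I_k * 'I_k | gE q.1 q.2]].

Definition image_subgraph (l : {ffun 'I_k -> 'I_n}) :=
  (l @: setT, edge_image l).

Definition is_hom (l : {ffun 'I_k -> 'I_n}) : bool :=
  [forall u, forall v, gE u v ==> adj (l u) (l v)].

Definition is_embedding (l : {ffun 'I_k -> 'I_n}) : bool :=
  injectiveb l && is_hom l.

Definition graph_aut : {set {perm 'I_k}} :=
  [set s : {perm 'I_k} | [forall u, forall v, gE (s u) (s v) == gE u v]].

Lemma n_autE : n_aut gE = #|graph_aut|.
Proof. by []. Qed.

Lemma n_aut_gt0 : (0 < n_aut gE)%N.
Proof.
rewrite n_autE card_gt0; apply/set0Pn; exists 1%g; rewrite inE.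
by apply/forallP=> u; apply/forallP=> v; rewrite !perm1.
Qed.

Lemma is_homP (l : {ffun 'I_k -> 'I_n}) :
  reflect (forall u v, gE u v -> adj (l u) (l v)) (is_hom l).
Proof.
apply: (iffP forallP) => [hom u v | hom u].
  by have /forallP/(_ v)/implyP := hom u.
by apply/forallP=> v; apply/implyP; apply: hom.
Qed.

Lemma graph_autP (s : {perm 'I_k}) :
  reflect (forall u v, gE (s u) (s v) = gE u v) (s \in graph_aut).
Proof.
rewrite inE; apply: (iffP forallP) => [aut u v | aut u].
  by apply/eqP; have /forallP := aut u; apply.
by apply/forallP=> v; rewrite aut.
Qed.

Hypothesis gE_sym : symmetric gE.

Lemma mem_edge_image (l : {ffun 'I_k -> 'I_n}) : injective l ->
  forall u v, ([set l u; l v] \in edge_image l) = gE u v.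
Proof.
move=> l_inj u v; apply/imsetP/idP => [[q]|guv]; last by exists (u, v); rewrite ?inE.
by rewrite inE => gq /eq_set2[[/l_inj-> /l_inj->]|[/l_inj-> /l_inj->]]; rewrite // gE_sym.
Qed.

Lemma image_subgraph_iso (l : {ffun 'I_k -> 'I_n}) :
  is_embedding l -> iso_subgraph adj gE (image_subgraph l).
Proof.
case/andP=> l_inj /is_homP l_hom.
apply/andP; split.
  apply/subsetP=> x /imsetP[q]; rewrite inE => gq ->.
  by apply: imset2_f; rewrite ?inE ?imset_f ?l_hom.
apply/existsP; exists l; rewrite l_inj eqxx /=.
by apply/forallP=> u; apply/forallP=> v; rewrite mem_edge_image //; apply/injectiveP.
Qed.

Lemma embedding_comp_aut (l : {ffun 'I_k -> 'I_n}) (s : {perm 'I_k}) :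
  is_embedding l -> s \in graph_aut -> is_embedding [ffun u => l (s u)].
Proof.
case/andP=> /injectiveP l_inj /is_homP l_hom /graph_autP s_aut.
apply/andP; split.
  by apply/injectiveP=> u v; rewrite !ffunE => /l_inj /perm_inj.
by apply/is_homP=> u v; rewrite !ffunE -s_aut; apply: l_hom.
Qed.

Lemma image_subgraph_comp_aut (l : {ffun 'I_k -> 'I_n}) (s : {perm 'I_k}) :
  s \in graph_aut -> image_subgraph [ffun u => l (s u)] = image_subgraph l.
Proof.
move=> /graph_autP s_aut; congr (_, _).
  apply/setP=> x; apply/imsetP/imsetP => [[u _ ->]|[u _ ->]].
    by exists (s u); rewrite ?ffunE.
  by exists ((s^-1)%g u); rewrite ?ffunE ?permKV.
apply/setP=> x; apply/imsetP/imsetP => [[q]|[q]]; rewrite inE => gq ->.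
  by exists (s q.1, s q.2); rewrite ?inE ?ffunE /= ?s_aut.
exists ((s^-1)%g q.1, (s^-1)%g q.2); first by rewrite inE /= -s_aut !permKV.
by rewrite !ffunE !permKV.
Qed.

Lemma eq_image_subgraph (l l0 : {ffun 'I_k -> 'I_n}) :
  injective l -> injective l0 -> image_subgraph l = image_subgraph l0 ->
  exists2 s, s \in graph_aut & l = [ffun u => l0 (s u)].
Proof.
move=> l_inj l0_inj [eq_V eq_E].
have preim u : exists u', l0 u' == l u.
  have : l u \in l0 @: setT by rewrite -eq_V imset_f.
  by case/imsetP=> u' _ ->; exists u'.
pose s u := xchoose (preim u).
have sE u : l0 (s u) = l u by apply/eqP: (xchooseP (preim u)).
have s_inj : injective s by move=> u v suv; apply: l_inj; rewrite -!sE suv.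
exists (perm s_inj); last by apply/ffunP=> u; rewrite ffunE permE sE.
apply/graph_autP=> u v; rewrite !permE.
by rewrite -(mem_edge_image l0_inj) !sE -eq_E mem_edge_image.
Qed.

Lemma embeddings_of_image (l0 : {ffun 'I_k -> 'I_n}) : is_embedding l0 ->
  [set l | is_embedding l && (image_subgraph l == image_subgraph l0)] =
  [set [ffun u => l0 (s u)] | s : {perm 'I_k} in graph_aut].
Proof.
move=> l0_emb; have /andP[/injectiveP l0_inj _] := l0_emb.
apply/setP=> l; rewrite inE; apply/andP/imsetP => [[l_emb /eqP eq_img]|[s s_aut ->]].
  by apply: eq_image_subgraph => //; apply/injectiveP; case/andP: l_emb.
by rewrite embedding_comp_aut // image_subgraph_comp_aut.
Qed.

Hypothesis adj_sym : symmetric adj.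

Lemma iso_subgraph_image SF :
  iso_subgraph adj gE SF -> exists2 l, is_embedding l & image_subgraph l = SF.
Proof.
case: SF => S F /andP[/= /subsetP F_sub /existsP[f /and3P[f_inj /eqP fS /forallP f_iso]]].
have fF u v : ([set f u; f v] \in F) = gE u v.
  by have /forallP/(_ v)/eqP := f_iso u.
exists f.
  rewrite /is_embedding f_inj; apply/is_homP=> u v; rewrite -fF => /F_sub.
  case/imset2P=> x y _; rewrite inE => /andP[_ adj_xy].
  by case/eq_set2=> -[-> ->]; rewrite // adj_sym.
rewrite /image_subgraph fS; congr (_, _); apply/setP=> x.
apply/imsetP/idP => [[q]|x_in_F]; first by rewrite inE -fF => ? ->.
have /imset2P[a b] := F_sub _ x_in_F; rewrite inE -fS => /imsetP[u _ ->].
case/andP=> /imsetP[v _ ->] _ x_uv; rewrite x_uv in x_in_F *.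
by exists (u, v); rewrite // inE /= -fF.
Qed.

Lemma card_embeddings :
  #|[set l | is_embedding l]| = (graphlet_count adj gE * n_aut gE)%N.
Proof.
rewrite -sum1dep_card (partition_big image_subgraph (iso_subgraph adj gE)) /=;
  last exact: image_subgraph_iso.
rewrite /graphlet_count -sum_nat_cond_const; apply: eq_bigr => SF /iso_subgraph_image.
case=> l0 /[dup] l0_emb /andP[/injectiveP l0_inj _] <-.
rewrite sum1dep_card embeddings_of_image // n_autE card_in_imset //.
move=> s t _ _ /ffunP eq_st; apply/permP=> u.
by apply: l0_inj; move: (eq_st u); rewrite !ffunE.
Qed.

Hypothesis gE_irr : irreflexive gE.

Lemma prod_edges_is_hom (R : comPzSemiRingType) (l : {ffun 'I_k -> 'I_n}) :
  \prod_(q : 'I_k * 'I_k | (q.1 < q.2)%N && gE q.1 q.2) (adj (l q.1) (l q.2))%:R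
  = (is_hom l)%:R :> R.
Proof.
have [l_hom | ] := boolP (is_hom l).
  by apply: big1 => q /andP[_ /(is_homP _ l_hom)->].
rewrite negb_forall => /existsP[u]; rewrite negb_forall => /existsP[v].
rewrite negb_imply => /andP[guv not_adj].
case: (ltngtP u v) => [lt_uv | lt_vu | /val_inj eq_uv].
- rewrite (bigD1 (u, v)) /=; last by rewrite lt_uv guv.
  by rewrite (negbTE not_adj) mul0r.
- rewrite (bigD1 (v, u)) /= ?lt_vu 1?gE_sym ?guv //.
  by rewrite adj_sym (negbTE not_adj) mul0r.
- by rewrite eq_uv gE_irr in guv.
Qed.

End Embeddings.

Section Estimator.

Variables (R : realType) (eps : R).

Lemma rr_prob_sum1 (diag a : bool) : \sum_(b : bool) rr_prob eps diag a b = 1.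
Proof.
rewrite big_bool /rr_prob; case: diag => /=; first by rewrite add0r.
have e_p1 : 1 + expR eps != 0 by rewrite gt_eqF // ltr_wpDl // expR_gt0.
by case: a => /=; field.
Qed.

Definition debias (b : bool) : R :=
  (expR eps + 1) / (expR eps - 1) * b%:R - 1 / (expR eps - 1).

Hypothesis eps_gt0 : 0 < eps.

Lemma debias_unbiased (a : bool) :
  \sum_(b : bool) rr_prob eps false a b * debias b = a%:R.
Proof.
have e_p1 : 1 + expR eps != 0 by rewrite gt_eqF // ltr_wpDl // expR_gt0.
have e_m1 : expR eps - 1 != 0 by rewrite subr_eq0 gt_eqF // pexpR_gt1.
by rewrite big_bool /rr_prob /debias; case: a => /=; field; rewrite e_p1 e_m1.
Qed.

Variables (n k : nat) (adj : rel 'I_n) (gE : rel 'I_k).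

Lemma expect_W_tilde (l : {ffun 'I_k -> 'I_n}) : injective l ->
  \sum_(om : report n) report_prob eps adj om * W_tilde eps gE om l =
  \prod_(q : 'I_k * 'I_k | (q.1 < q.2)%N && gE q.1 q.2) (adj (l q.1) (l q.2))%:R.
Proof.
move=> l_inj.
pose pairs := [set (l q.1, l q.2) | q in [set q : 'I_k * 'I_k | (q.1 < q.2)%N && gE q.1 q.2]].
have reindex (G : 'I_n * 'I_n -> R) :
    \prod_(q : 'I_k * 'I_k | (q.1 < q.2)%N && gE q.1 q.2) G (l q.1, l q.2) =
    \prod_(p in pairs) G p.
  rewrite big_imset /=; first by apply: eq_bigl => q; rewrite inE.
  by move=> [u v] [u' v'] _ _ [/l_inj-> /l_inj->].
pose F p b := rr_prob eps (p.1 == p.2) (adj p.1 p.2) b *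
              (if p \in pairs then debias b else 1).
have factor om : report_prob eps adj om * W_tilde eps gE om l = \prod_p F p (om p).
  rewrite /W_tilde pair_big_dep /= (reindex (fun p => a_hat eps om p.1 p.2)).
  rewrite /report_prob (big_mkcond (fun p => p \in pairs)) -big_split.
  by apply: eq_bigr => -[i j] _.
(* Independence of the pairs: a sum over reports of a product of per-pair
   factors is the product over pairs of the per-pair sums. *)
rewrite (eq_bigr _ (fun om _ => factor om)) -(bigA_distr_bigA F).
rewrite (reindex (fun p => (adj p.1 p.2)%:R)) (big_mkcond (fun p => p \in pairs)).
apply: eq_bigr => p _; rewrite /F; have [p_pair | p_npair] := boolP (p \in pairs).
  have /negbTE-> : p.1 != p.2.
    case/imsetP: p_pair => q; rewrite inE => /andP[lt_q _] -> /=.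
    by apply: contraTneq lt_q => /l_inj->; rewrite ltnn.
  exact: debias_unbiased.
by under eq_bigr do rewrite mulr1; apply: rr_prob_sum1.
Qed.

Hypotheses (gE_sym : symmetric gE) (gE_irr : irreflexive gE).
Hypothesis adj_sym : symmetric adj.

Lemma expect_sum_W_tilde :
  \sum_(om : report n) report_prob eps adj om *
    \sum_(l : {ffun 'I_k -> 'I_n} | injectiveb l) W_tilde eps gE om l =
  #|[set l | is_embedding adj gE l]|%:R.
Proof.
under eq_bigr do rewrite mulr_sumr.
rewrite exchange_big -sum1dep_card natr_sum big_mkcondr /=.
apply: eq_bigr => l /injectiveP l_inj.
by rewrite expect_W_tilde // prod_edges_is_hom //; case: is_hom.
Qed.

End Estimator.

Theorem lemma2 (R : realType) (eps : R) (heps : 0 < eps)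
    (k : nat) (gE : rel 'I_k) (hgE : simple_graph gE)
    (n : nat) (adj : rel 'I_n) (hG : simple_graph adj) :
  expected_estimate eps adj gE = (graphlet_count adj gE)%:R.
Proof.
have [gE_sym gE_irr] := hgE; have [adj_sym _] := hG.
rewrite /expected_estimate /estimator.
under eq_bigr do rewrite mulrA.
rewrite -mulr_suml expect_sum_W_tilde // card_embeddings // natrM mulfK //.
by rewrite pnatr_eq0 -lt0n n_aut_gt0.
Qed.
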